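(* Let $A_1,\dots,A_d\in\mathbb{R}^{d\times d}$ be symmetric and define $H^m:\mathbb{R}^d\to\mathbb{R}^d$ and $H^v:\mathbb{R}^d\to\mathbb{R}^{d^2}$ by $$H^m_k(z)=z^{\intercal}A_kz,\qquad H^v_{kl}(z)=(z^{\intercal}A_kz)z_l+z_k(z^{\intercal}A_lz),\quad 1\le k,l\le d.$$ Let $\tilde\rho$ be a probability density on $\mathbb{R}^d$ with all moments finite, $\tilde{\mathbb{E}}$ the expectation with respect to $\tilde\rho$, $\bar H^m=\tilde{\mathbb{E}}[H^m(\tilde Z)]$, $\bar H^v=\tilde{\mathbb{E}}[H^v(\tilde Z)]$, and let $\Gamma_m,\Gamma_v$ be symmetric positive definite matrices of sizes $d\times d$ and $d^2\times d^2$. Define $K^m=\tilde K^m\Gamma_m^{-2}$ and $K^v=\tilde K^v\Gamma_v^{-2}$ with $\tilde K^m(z)\in\mathbb{R}^{d\times d}$, $\tilde K^v(z)\in\mathbb{R}^{d\times d^2}$ given by $$\tilde K^m_{j,k}(z)=\tfrac12 z_j\big[(z^{\intercal}A_kz)-\bar H^m_k\big],\qquad \tilde K^v_{j,kl}(z)=\tfrac13z_j(z^{\intercal}A_kz)z_l+\tfrac13z_j(z^{\intercal}A_lz)z_k-\tfrac13z_j\bar H^v_{kl}.$$ Then for $(K,H,\Gamma)=(K^m,H^m,\Gamma_m)$ and $(K,H,\Gamma)=(K^v,H^v,\Gamma_v)$, $$\tilde{\mathbb{E}}\big[K(\tilde Z)^{\intercal}\nabla H(\tilde Z)\big]=\Gamma^{-2}C^H,\qquad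 C^H=\tilde{\mathbb{E}}\big[(H(\tilde Z)-\bar H)(H(\tilde Z)-\bar H)^{\intercal}\big].$$
   Context: $\tilde Z$ is a random vector with density $\tilde\rho$. For a vector-valued $H$, $\nabla H$ is the matrix $(\nabla H)_{jl}=\partial_{z_j}H_l$, so $(K^{\intercal}\nabla H)_{kl}=\sum_jK_{jk}\partial_{z_j}H_l$. Indices of $H^v$ and of the columns of $\tilde K^v$ run over pairs $(k,l)$, $1\le k,l\le d$. *)

From HB Require Import structures.
From mathcomp Require Import all_boot all_order all_algebra.
From mathcomp Require Import all_classical all_reals all_analysis.
Set Implicit Arguments. Unset Strict Implicit. Unset Printing Implicit Defensive.
Import Order.TTheory GRing.Theory Num.Theory.
Import numFieldNormedType.Exports.
Local Open Scope classical_set_scope.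
Local Open Scope ring_scope.

Section defs.
Variable R : realType.

(* Points of R^d are represented as row vectors 'rV[R]_d for the analytic
   part (derivatives) and as d-tuples (product sigma-algebra) for the
   measure-theoretic part; [tup2rv] is the canonical identification. *)
Definition tup2rv (d : nat) (z : d.-tuple R) : 'rV[R]_d := \row_j tnth z j.

(* For nonnegative measurable f this is
   the integral against d-dimensional Lebesgue measure (Tonelli). *)
Fixpoint lebesgue_iint (d : nat) : (d.-tuple R -> \bar R) -> \bar R :=
  match d return (d.-tuple R -> \bar R) -> \bar R with
  | 0 => fun f => f [tuple]
  | n.+1 => fun f =>
      (\int[@lebesgue_measure R]_x lebesgue_iint (fun t : n.-tuple R => f [tuple of x :: t]))%E
  end.

Definition is_density (d : nat) (P : probability (d.-tuple R) R)
    (rho : d.-tuple R -> R) : Prop :=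
  [/\ forall z, 0 <= rho z,
      measurable_fun setT rho &
      forall S : set (d.-tuple R), measurable S ->
        P S = lebesgue_iint (fun z => ((\1_S z : R) * rho z)%:E)].

Definition all_moments_finite (d : nat) (P : probability (d.-tuple R) R) : Prop :=
  forall (j : 'I_d) (k : nat), P.-integrable setT (fun z => ((tnth z j) ^+ k)%:E).

Definition Ex (d : nat) (P : probability (d.-tuple R) R) (f : 'rV[R]_d -> R) : R :=
  Rintegral P setT (fun z => f (tup2rv z)).

Definition Emx (d m n : nat) (P : probability (d.-tuple R) R)
    (F : 'rV[R]_d -> 'M[R]_(m, n)) : 'M[R]_(m, n) :=
  \matrix_(i, j) Ex P (fun z => F z i j).

Definition spd (n : nat) (G : 'M[R]_n) : Prop :=
  G^T = G /\ forall x : 'rV[R]_n, x != 0 -> 0 < (x *m G *m x^T) 0 0.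

Definition quad (d : nat) (A : 'M[R]_d) (z : 'rV[R]_d) : R := (z *m A *m z^T) 0 0.

Definition grad (d n : nat) (H : 'rV[R]_d -> 'cV[R]_n) (z : 'rV[R]_d) : 'M[R]_(d, n) :=
  \matrix_(j, l) 'D_(delta_mx 0 j) (fun x => H x l 0) z.

Definition covH (d n : nat) (P : probability (d.-tuple R) R)
    (H : 'rV[R]_d -> 'cV[R]_n) : 'M[R]_n :=
  let Hbar := Emx P H in
  Emx P (fun z => (H z - Hbar) *m (H z - Hbar)^T).

Definition Hm (d : nat) (A : 'I_d -> 'M[R]_d) (z : 'rV[R]_d) : 'cV[R]_d :=
  \col_k quad (A k) z.

(* H^v_{kl}(z) = (z^T A_k z) z_l + z_k (z^T A_l z); the pair (k,l) is
   flattened to the index mxvec_index k l of 'I_(d * d). *)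
Definition Hv (d : nat) (A : 'I_d -> 'M[R]_d) (z : 'rV[R]_d) : 'cV[R]_(d * d) :=
  (mxvec (\matrix_(k, l) (quad (A k) z * z 0 l + z 0 k * quad (A l) z)))^T.

Definition Ktm (d : nat) (P : probability (d.-tuple R) R) (A : 'I_d -> 'M[R]_d)
    (z : 'rV[R]_d) : 'M[R]_d :=
  let Hbar := Emx P (Hm A) in
  \matrix_(j, k) (2^-1 * z 0 j * (quad (A k) z - Hbar k 0)).

Definition Ktv (d : nat) (P : probability (d.-tuple R) R) (A : 'I_d -> 'M[R]_d)
    (z : 'rV[R]_d) : 'M[R]_(d, d * d) :=
  let Hbar := Emx P (Hv A) in
  \matrix_j (mxvec (\matrix_(k, l)
     (3^-1 * z 0 j * quad (A k) z * z 0 l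
    + 3^-1 * z 0 j * quad (A l) z * z 0 k
    - 3^-1 * z 0 j * Hbar (mxvec_index k l) 0))).
End defs.

From HB Require Import structures.
From mathcomp Require Import all_boot all_order all_algebra.
From mathcomp Require Import all_classical all_reals all_analysis.
From mathcomp Require Import ring lra measurable_realfun.
Import Order.TTheory GRing.Theory Num.Theory.
Import numFieldNormedType.Exports.
Local Open Scope classical_set_scope.
Local Open Scope ring_scope.
Set Implicit Arguments. Unset Strict Implicit.

(* Both H^m and H^v are homogeneous polynomials (of degrees 2 and 3), so
   Euler's identity z^T grad H(z) = c H(z)^T holds with c = 2, 3.  Since
   K~(z) = c^-1 z (H(z) - Hbar)^T, this gives pointwise
   (K~ G)^T grad H = G (H - Hbar) H^T for symmetric G = Gamma^-2, and the
   expectation of (H - Hbar) H^T is the covariance C^H because H - Hbar is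
   centred.  Finite moments make every function of polynomial growth
   integrable, which justifies the linearity of the expectation. *)

Section PolynomialGrowth.
Variables (R : realType) (d : nat).

Definition maxabs (z : 'rV[R]_d) : R := \big[Num.max/0]_j `|z 0 j|.

Lemma maxabs_ge0 (z : 'rV[R]_d) : 0 <= maxabs z.
Proof. exact: bigmax_ge_id. Qed.

Lemma le_maxabs (z : 'rV[R]_d) j : `|z 0 j| <= maxabs z.
Proof. exact: le_bigmax. Qed.

Lemma expr_maxabs_le_sum (z : 'rV[R]_d) N :
  maxabs z ^+ N <= 1 + \sum_j `|z 0 j| ^+ N.
Proof.
have sum_ge0 : 0 <= \sum_j `|z 0 j| ^+ N.
  by rewrite sumr_ge0 // => j _; rewrite exprn_ge0.
apply: (big_ind (fun x => x ^+ N <= 1 + \sum_j `|z 0 j| ^+ N)).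
- by rewrite expr0n; case: (_ == _); rewrite ?mulr1n ?mulr0n; lra.
- by move=> x y hx hy; rewrite /Order.max; case: ifP.
- move=> j _; rewrite (bigD1 j) //=.
  have : 0 <= \sum_(i < d | i != j) `|z 0 i| ^+ N.
    by rewrite sumr_ge0 // => i _; rewrite exprn_ge0.
  lra.
Qed.

Lemma expr_maxabs_le (z : 'rV[R]_d) N :
  (1 + maxabs z) ^+ N <= 2 ^+ N * (1 + \sum_j `|z 0 j| ^+ N).
Proof.
have m_ge0 := maxabs_ge0 z.
have pow2_ge0 : 0 <= 2 ^+ N :> R by exact: exprn_ge0.
have sum_ge0 : 0 <= \sum_j `|z 0 j| ^+ N.
  by rewrite sumr_ge0 // => j _; rewrite exprn_ge0.
have := expr_maxabs_le_sum z N.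
have [m_le1|m_gt1] := leP (maxabs z) 1.
  have : (1 + maxabs z) ^+ N <= 2 ^+ N by apply: lerXn2r; rewrite ?nnegrE; lra.
  have := exprn_ge0 N m_ge0; nra.
have : (1 + maxabs z) ^+ N <= (2 * maxabs z) ^+ N.
  by apply: lerXn2r; rewrite ?nnegrE; lra.
rewrite exprMn; nra.
Qed.

Definition polygrowth (f : 'rV[R]_d -> R) : Prop :=
  measurable_fun setT (fun t : d.-tuple R => f (tup2rv t)) /\
  exists (C : R) (N : nat), 0 <= C /\ forall z, `|f z| <= C * (1 + maxabs z) ^+ N.

Lemma eq_polygrowth (f g : 'rV[R]_d -> R) : f =1 g -> polygrowth f -> polygrowth g.
Proof. by move/funext ->. Qed.

Lemma polygrowth_cst (a : R) : polygrowth (fun _ => a).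
Proof.
split; first exact: measurable_cst.
by exists `|a|, 0%N; split => // z; rewrite expr0 mulr1.
Qed.

Lemma polygrowth_coord (j : 'I_d) : polygrowth (fun z : 'rV[R]_d => z 0 j).
Proof.
split.
  rewrite (_ : (fun t => _) = fun t : d.-tuple R => tnth t j).
    exact: measurable_tnth.
  by apply/funext => t; rewrite mxE.
exists 1, 1%N; split => // z; rewrite expr1 mul1r.
have := le_maxabs z j; lra.
Qed.

Lemma polygrowthD (f g : 'rV[R]_d -> R) :
  polygrowth f -> polygrowth g -> polygrowth (fun z => f z + g z).
Proof.
move=> [mf [C1 [N1 [C1_ge0 f_le]]]] [mg [C2 [N2 [C2_ge0 g_le]]]].
split; first exact: measurable_funD.
exists (C1 + C2), (N1 + N2)%N; split=> [|z]; first lra.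
have one_le : 1 <= 1 + maxabs z by have := maxabs_ge0 z; lra.
have p1 : C1 * (1 + maxabs z) ^+ N1 <= C1 * (1 + maxabs z) ^+ (N1 + N2).
  by rewrite ler_wpM2l // ler_weXn2l // leq_addr.
have p2 : C2 * (1 + maxabs z) ^+ N2 <= C2 * (1 + maxabs z) ^+ (N1 + N2).
  by rewrite ler_wpM2l // ler_weXn2l // leq_addl.
have := ler_normD (f z) (g z); have := f_le z; have := g_le z.
rewrite mulrDl; lra.
Qed.

Lemma polygrowthM (f g : 'rV[R]_d -> R) :
  polygrowth f -> polygrowth g -> polygrowth (fun z => f z * g z).
Proof.
move=> [mf [C1 [N1 [C1_ge0 f_le]]]] [mg [C2 [N2 [C2_ge0 g_le]]]].
split; first exact: measurable_funM.
exists (C1 * C2), (N1 + N2)%N; split=> [|z]; first exact: mulr_ge0.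
by rewrite normrM exprD mulrACA ler_pM.
Qed.

Lemma polygrowthB (f g : 'rV[R]_d -> R) :
  polygrowth f -> polygrowth g -> polygrowth (fun z => f z - g z).
Proof.
move=> pf pg.
apply: eq_polygrowth (polygrowthD pf (polygrowthM (polygrowth_cst (-1)) pg)) => z.
by rewrite mulN1r.
Qed.

Lemma polygrowth_sum (I : Type) (s : seq I) (F : I -> 'rV[R]_d -> R) :
  (forall i, polygrowth (F i)) -> polygrowth (fun z => \sum_(i <- s) F i z).
Proof.
move=> pF; elim: s => [|i s IH].
  by apply: eq_polygrowth (polygrowth_cst 0) => z; rewrite big_nil.
by apply: eq_polygrowth (polygrowthD (pF i) IH) => z; rewrite big_cons.
Qed.

Lemma polygrowth_quad (A : 'M[R]_d) : polygrowth (quad A).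
Proof.
apply: (@eq_polygrowth (fun z => \sum_b (\sum_a z 0 a * A a b) * z 0 b)).
  move=> z; rewrite /quad mxE; apply: eq_bigr => b _; rewrite !mxE.
  by congr (_ * _); apply: eq_bigr => a _; rewrite mxE.
apply: polygrowth_sum => b; apply: polygrowthM (polygrowth_coord b).
by apply: polygrowth_sum => a; apply: polygrowthM (polygrowth_coord a) (polygrowth_cst _).
Qed.

End PolynomialGrowth.

Arguments polygrowth_cst {R d} a.
Arguments polygrowth_coord {R d} j.

Section Expectation.
Variables (R : realType) (d : nat) (P : probability (d.-tuple R) R).
Hypothesis hmom : all_moments_finite P.

Lemma polygrowth_integrable (f : 'rV[R]_d -> R) :
  polygrowth f -> P.-integrable setT (EFin \o (fun t => f (tup2rv t))).
Proof.
move=> [mf [C [N [C_ge0 f_le]]]].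
have intD g h : P.-integrable setT (EFin \o g) -> P.-integrable setT (EFin \o h) ->
    P.-integrable setT (EFin \o (fun t => g t + h t)).
  by move=> ig ih; exact: (integrableD _ ig ih).
have int_moments : P.-integrable setT
    (EFin \o (fun t : d.-tuple R => 1 + \sum_j `|tup2rv t 0 j| ^+ N)).
  apply: (intD); first exact: finite_measure_integrable_cst.
  elim: (index_enum 'I_d) => [|j s IH].
    have cst0 := finite_measure_integrable_cst P 0 measurableT.
    by apply: (eq_integrable _ _ _ _ cst0) => //= t _; rewrite big_nil.
  apply: (eq_integrable _ _ _ _ (intD _ _ (integrable_norm (hmom j N)) IH)) => //= t _.
  by rewrite big_cons mxE normrX.
apply: le_integrable (integrableZl _ (C * 2 ^+ N) int_moments) => //.
  exact/measurable_EFinP.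
move=> t _ /=; rewrite lee_fin.
have bound_ge0 : 0 <= C * 2 ^+ N * (1 + \sum_j `|tup2rv t 0 j| ^+ N).
  rewrite mulr_ge0 ?mulr_ge0 ?exprn_ge0 //.
  by rewrite addr_ge0 // sumr_ge0 // => j _; rewrite exprn_ge0.
rewrite (ger0_norm bound_ge0) (le_trans (f_le _)) // -mulrA ler_wpM2l //.
exact: expr_maxabs_le.
Qed.

Lemma Ex_cst (a : R) : Ex P (fun _ => a) = a.
Proof. by rewrite /Ex Rintegral_cst //= probability_setT mulr1. Qed.

Lemma ExD (f g : 'rV[R]_d -> R) : polygrowth f -> polygrowth g ->
  Ex P (fun z => f z + g z) = Ex P f + Ex P g.
Proof. by move=> pf pg; rewrite /Ex RintegralD //; exact: polygrowth_integrable. Qed.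

Lemma ExB (f g : 'rV[R]_d -> R) : polygrowth f -> polygrowth g ->
  Ex P (fun z => f z - g z) = Ex P f - Ex P g.
Proof. by move=> pf pg; rewrite /Ex RintegralB //; exact: polygrowth_integrable. Qed.

Lemma ExZ (a : R) (f : 'rV[R]_d -> R) :
  polygrowth f -> Ex P (fun z => a * f z) = a * Ex P f.
Proof. by move=> pf; rewrite /Ex RintegralZl //; exact: polygrowth_integrable. Qed.

Lemma Ex_sum (I : Type) (s : seq I) (F : I -> 'rV[R]_d -> R) :
  (forall i, polygrowth (F i)) ->
  Ex P (fun z => \sum_(i <- s) F i z) = \sum_(i <- s) Ex P (F i).
Proof.
move=> pF; elim: s => [|i s IH].
  by rewrite big_nil -[RHS](Ex_cst 0); congr Ex; apply/funext => z; rewrite big_nil.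
rewrite big_cons -IH -ExD //; last exact: polygrowth_sum.
by congr Ex; apply/funext => z; rewrite big_cons.
Qed.

Lemma Ex_center (f : 'rV[R]_d -> R) : polygrowth f -> Ex P (fun z => f z - Ex P f) = 0.
Proof. by move=> pf; rewrite ExB ?Ex_cst ?subrr //; exact: polygrowth_cst. Qed.

Lemma Emx_mulmxl m n p (G : 'M[R]_(m, n)) (M : 'rV[R]_d -> 'M[R]_(n, p)) :
  (forall i j, polygrowth (fun z => M z i j)) ->
  Emx P (fun z => G *m M z) = G *m Emx P M.
Proof.
move=> pM; apply/matrixP => i j; rewrite !mxE.
rewrite (_ : (fun z => _) = fun z => \sum_k G i k * M z k j); last first.
  by apply/funext => z; rewrite mxE.
rewrite Ex_sum => [|k]; last by apply: polygrowthM; [exact: polygrowth_cst | exact: pM].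
by apply: eq_bigr => k _; rewrite ExZ // mxE.
Qed.

Lemma covHE n (H : 'rV[R]_d -> 'cV[R]_n) :
  (forall i, polygrowth (fun z => H z i 0)) ->
  covH P H = Emx P (fun z => (H z - Emx P H) *m (H z)^T).
Proof.
move=> pH; rewrite /covH; set Hb := Emx P H.
have pHc i : polygrowth (fun z => H z i 0 - Hb i 0).
  exact: polygrowthB (pH i) (polygrowth_cst _).
have Hc_center i : Ex P (fun z => H z i 0 - Hb i 0) = 0.
  by rewrite [Hb i 0]mxE Ex_center.
apply/matrixP => i l; rewrite !mxE.
rewrite (_ : (fun z => _) =
    fun z => (H z i 0 - Hb i 0) * H z l 0 - Hb l 0 * (H z i 0 - Hb i 0)); last first.
  by apply/funext => z; rewrite !mxE big_ord1 !mxE; ring.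
rewrite ExB; last 2 first.
- exact: polygrowthM (pHc i) (pH l).
- exact: polygrowthM (polygrowth_cst _) (pHc i).
rewrite ExZ // Hc_center mulr0 subr0.
by congr Ex; apply/funext => z; rewrite !mxE big_ord1 !mxE.
Qed.

Lemma Emx_K_grad n (H : 'rV[R]_d -> 'cV[R]_n) (K : 'rV[R]_d -> 'M[R]_(d, n))
    (G : 'M[R]_n) (c : R) :
  c != 0 -> G^T = G ->
  (forall z, z *m grad H z = c *: (H z)^T) ->
  (forall z, K z = c^-1 *: (z^T *m (H z - Emx P H)^T)) ->
  (forall i, polygrowth (fun z => H z i 0)) ->
  Emx P (fun z => (K z *m G)^T *m grad H z) = G *m covH P H.
Proof.
move=> c_neq0 G_sym euler K_outer pH.
have pointwise z :
    (K z *m G)^T *m grad H z = G *m ((H z - Emx P H) *m (H z)^T).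
  rewrite K_outer trmx_mul G_sym -mulmxA; congr (_ *m _).
  rewrite linearZ /= trmx_mul !trmxK -scalemxAl -mulmxA euler -scalemxAr.
  by rewrite scalerA mulVf // scale1r.
rewrite (funext pointwise) Emx_mulmxl ?covHE // => i j.
apply: eq_polygrowth (polygrowthM (polygrowthB (pH i) (polygrowth_cst _)) (pH j)).
by move=> z; rewrite !mxE big_ord1 !mxE.
Qed.

End Expectation.

Lemma derive_cubic (R : realType) (V : normedModType R) (f : V -> R) (x v : V)
    (b c e : R) :
  (forall h, f (h *: v + x) = f x + h * b + h ^+ 2 * c + h ^+ 3 * e) ->
  'D_v f x = b.
Proof.
move=> f_exp; apply: cvg_lim => //.
have -> : (fun h : R => h^-1 *: ((f \o shift x) (h *: v) - f x))
    = (fun h => h^-1 * (h * (b + h * (c + h * e)))).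
  by apply/funext => h /=; rewrite /shift /= f_exp; congr (_ * _); ring.
apply: (@cvg_trans _ ((fun h : R => b + h * (c + h * e)) @ 0^')).
  apply: near_eq_cvg; near=> h.
  rewrite mulrA mulVf ?mul1r //.
  near: h; exact: nbhs_dnbhs_neq.
have : (fun h : R => b + h * (c + h * e)) h @[h --> (0 : R)] --> b + 0 * (c + 0 * e).
  apply: cvgD; first exact: cvg_cst.
  apply: cvgM; first exact: cvg_id.
  by apply: cvgD; [exact: cvg_cst | apply: cvgM; [exact: cvg_id | exact: cvg_cst]].
rewrite mul0r addr0; exact: cvg_within_filter.
Unshelve. all: by end_near.
Qed.

Section Gradients.
Variables (R : realType) (d : nat).

Definition bform (A : 'M[R]_d) (u w : 'rV[R]_d) : R := (u *m A *m w^T) 0 0.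

Lemma quadE (A : 'M[R]_d) z : quad A z = bform A z z.
Proof. by []. Qed.

Lemma bformDl (A : 'M[R]_d) (a : R) u w v :
  bform A (a *: u + w) v = a * bform A u v + bform A w v.
Proof. by rewrite /bform !mulmxDl -!scalemxAl !mxE. Qed.

Lemma bformDr (A : 'M[R]_d) (a : R) u v w :
  bform A u (a *: v + w) = a * bform A u v + bform A u w.
Proof. by rewrite /bform linearD linearZ /= mulmxDr -scalemxAr !mxE. Qed.

Lemma quad_shift (A : 'M[R]_d) (h : R) v x :
  quad A (h *: v + x) = quad A x + h * (bform A v x + bform A x v) + h ^+ 2 * quad A v.
Proof. by rewrite !quadE bformDl !bformDr; ring. Qed.

Lemma derive_quad (A : 'M[R]_d) x v : 'D_v (quad A) x = bform A v x + bform A x v.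
Proof.
by apply: (@derive_cubic _ _ _ _ _ _ (quad A v) 0) => h; rewrite quad_shift; ring.
Qed.

Lemma linear_row_expand (L : 'rV[R]_d -> R) (z : 'rV[R]_d) :
  (forall a u w, L (a *: u + w) = a * L u + L w) ->
  \sum_j z 0 j * L (delta_mx 0 j) = L z.
Proof.
move=> L_lin; have L0 : L 0 = 0.
  by have := L_lin 1 0 0; rewrite scaler0 addr0 mul1r; lra.
rewrite [in RHS](row_sum_delta z).
elim: (index_enum 'I_d) => [|j s IH]; first by rewrite !big_nil.
by rewrite !big_cons L_lin IH.
Qed.

Lemma grad_Hm (A : 'I_d -> 'M[R]_d) z j l :
  grad (Hm A) z j l = bform (A l) (delta_mx 0 j) z + bform (A l) z (delta_mx 0 j).
Proof.
rewrite mxE -derive_quad; congr derive.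
by apply/funext => x; rewrite mxE.
Qed.

Lemma Hm_euler (A : 'I_d -> 'M[R]_d) (z : 'rV[R]_d) :
  z *m grad (Hm A) z = 2 *: (Hm A z)^T.
Proof.
apply/rowP => l; rewrite !mxE.
under eq_bigr do rewrite grad_Hm.
rewrite (@linear_row_expand (fun u => bform (A l) u z + bform (A l) z u)).
  by rewrite quadE; ring.
by move=> a u w; rewrite bformDl bformDr; ring.
Qed.

Lemma Hv_mxvec_index (A : 'I_d -> 'M[R]_d) x k l :
  Hv A x (mxvec_index k l) 0 = quad (A k) x * x 0 l + x 0 k * quad (A l) x.
Proof. by rewrite /Hv mxE mxvecE mxE. Qed.

Definition dHv (A : 'I_d -> 'M[R]_d) (z : 'rV[R]_d) k l (u : 'rV[R]_d) : R :=
  (bform (A k) u z + bform (A k) z u) * z 0 l + quad (A k) z * u 0 l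
  + u 0 k * quad (A l) z + z 0 k * (bform (A l) u z + bform (A l) z u).

Lemma grad_Hv (A : 'I_d -> 'M[R]_d) z j k l :
  grad (Hv A) z j (mxvec_index k l) = dHv A z k l (delta_mx 0 j).
Proof.
rewrite mxE; move: (delta_mx 0 j) => v.
apply: (@derive_cubic _ _ _ _ _ _
  (quad (A k) v * z 0 l + (bform (A k) v z + bform (A k) z v) * v 0 l
   + v 0 k * (bform (A l) v z + bform (A l) z v) + z 0 k * quad (A l) v)
  (quad (A k) v * v 0 l + v 0 k * quad (A l) v)) => h.
by rewrite !Hv_mxvec_index !quad_shift !mxE /dHv; ring.
Qed.

Lemma Hv_euler (A : 'I_d -> 'M[R]_d) (z : 'rV[R]_d) :
  z *m grad (Hv A) z = 3 *: (Hv A z)^T.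
Proof.
apply/rowP => i; case/mxvec_indexP: i => k l; rewrite !mxE mxvecE mxE.
under eq_bigr do rewrite grad_Hv.
rewrite linear_row_expand.
  by rewrite /dHv !quadE; ring.
by move=> a u w; rewrite /dHv !bformDl !bformDr !mxE; ring.
Qed.

End Gradients.

Section Kernels.
Variables (R : realType) (d : nat) (P : probability (d.-tuple R) R).
Variable A : 'I_d -> 'M[R]_d.

Lemma Ktm_outer z : Ktm P A z = 2^-1 *: (z^T *m (Hm A z - Emx P (Hm A))^T).
Proof. by apply/matrixP => j k; rewrite !mxE big_ord1 !mxE mulrA. Qed.

Lemma Ktv_outer z : Ktv P A z = 3^-1 *: (z^T *m (Hv A z - Emx P (Hv A))^T).
Proof.
apply/matrixP => j i; case/mxvec_indexP: i => k l.
rewrite !mxE big_ord1 !mxE !mxvecE !mxE -[ord0]/(0 : 'I_1); ring.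
Qed.

Lemma polygrowth_Hm k : polygrowth (fun z => Hm A z k 0).
Proof. by apply: eq_polygrowth (polygrowth_quad (A k)) => z; rewrite mxE. Qed.

Lemma polygrowth_Hv i : polygrowth (fun z => Hv A z i 0).
Proof.
case/mxvec_indexP: i => k l.
have pHkl := polygrowthM (polygrowth_quad (A k)) (polygrowth_coord l).
have pHlk := polygrowthM (polygrowth_coord k) (polygrowth_quad (A l)).
by apply: eq_polygrowth (polygrowthD pHkl pHlk) => z; rewrite Hv_mxvec_index.
Qed.

End Kernels.

Lemma sym_invmx_sqr (R : comUnitRingType) n (G : 'M[R]_n) :
  G^T = G -> (invmx G *m invmx G)^T = invmx G *m invmx G.
Proof. by move=> G_sym; rewrite trmx_mul trmx_inv G_sym. Qed.

Theorem proposition5p1 (R : realType) (d : nat)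
  (A : 'I_d -> 'M[R]_d) (hA : forall k, (A k)^T = A k)
  (P : probability (d.-tuple R) R) (rho : d.-tuple R -> R)
  (hrho : is_density P rho) (hmom : all_moments_finite P)
  (Gm : 'M[R]_d) (Gv : 'M[R]_(d * d)) (hGm : spd Gm) (hGv : spd Gv) :
  let Km := fun z => Ktm P A z *m (invmx Gm *m invmx Gm) in
  let Kv := fun z => Ktv P A z *m (invmx Gv *m invmx Gv) in
  Emx P (fun z => (Km z)^T *m grad (Hm A) z)
    = (invmx Gm *m invmx Gm) *m covH P (Hm A)
  /\
  Emx P (fun z => (Kv z)^T *m grad (Hv A) z)
    = (invmx Gv *m invmx Gv) *m covH P (Hv A).
Proof.
move=> Km Kv; split.
- apply: (Emx_K_grad hmom (c := 2)).
  + by rewrite pnatr_eq0.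
  + exact: sym_invmx_sqr hGm.1.
  + exact: Hm_euler.
  + exact: Ktm_outer.
  + exact: polygrowth_Hm.
- apply: (Emx_K_grad hmom (c := 3)).
  + by rewrite pnatr_eq0.
  + exact: sym_invmx_sqr hGv.1.
  + exact: Hv_euler.
  + exact: Ktv_outer.
  + exact: polygrowth_Hv.
Qed.
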